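(* Let $\langle \Lambda, \mathcal{S}\rangle$ be a measurable space and let $P_{00}, P_{0+}, P_{+0}, P_{++}$ be four probability measures on it that satisfy the Preparation Uninformativeness Condition, i.e. there is a measure $Q$ on $\langle \Lambda,\mathcal{S}\rangle$ dominating all four, with densities $\mu_{xy} = dP_{xy}/dQ$ ($x,y\in\{0,+\}$) such that for all $\lambda \in \Lambda$, $$\mu_{00}(\lambda)\,\mu_{++}(\lambda) = \mu_{0+}(\lambda)\,\mu_{+0}(\lambda).$$ Suppose there is an experiment $E$ with finite outcome set $K$, given by measurable functions $p_k:\Lambda\to[0,1]$ ($k\in K$) with $\sum_{k\in K} p_k(\lambda)=1$ for all $\lambda$, such that every outcome $k\in K$ is precluded by some $P_{xy}$, i.e. for each $k$ there are $x,y\in\{0,+\}$ with $\int_\Lambda p_k\, dP_{xy} = 0$. Then $P_{00}$ and $P_{++}$ have null overlap, and $P_{0+}$ and $P_{+0}$ have null overlap; that is, $\int_\Lambda \min(\mu_{00},\mu_{++})\,dQ = 0$ and $\int_\Lambda \min(\mu_{0+},\mu_{+0})\,dQ = 0$ (equivalently, the total variation distances $\delta(P_{00},P_{++})$ and $\delta(P_{0+},P_{+0})$ equal $1$).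
   Context: The total variation (statistical) distance between probability measures $P,Q'$ with densities $p,q$ with respect to a common dominating measure $\nu$ is $\delta(P,Q')=\sup_{A\in\mathcal{S}}|P(A)-Q'(A)| = 1-\int_\Lambda \min(p,q)\,d\nu$; the classical overlap is $\omega(P,Q')=1-\delta(P,Q')$, and ''null overlap'' means $\omega=0$. *)

From HB Require Import structures.
From mathcomp Require Import all_boot all_order all_algebra.
From mathcomp Require Import all_classical all_reals all_analysis.
Set Implicit Arguments. Unset Strict Implicit. Unset Printing Implicit Defensive.
Import Order.TTheory GRing.Theory Num.Theory.
Local Open Scope classical_set_scope.
Local Open Scope ring_scope.

(* Convention: the index set {0,+} is encoded as bool, false = 0, true = +. *)

Definition is_density d (T : measurableType d) (R : realType)
  (Q : {measure set T -> \bar R}) (P : set T -> \bar R) (f : T -> R) : Prop :=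
  measurable_fun setT f /\ (forall x, 0 <= f x) /\
  forall A, measurable A -> P A = (\int[Q]_(x in A) (f x)%:E)%E.

Definition PUC d (T : measurableType d) (R : realType)
  (mu : bool -> bool -> T -> R) : Prop :=
  forall l, mu false false l * mu true true l = mu false true l * mu true false l.

Definition experiment d (T : measurableType d) (R : realType) (K : finType)
  (p : K -> T -> R) : Prop :=
  (forall k, measurable_fun setT (p k)) /\
  (forall k l, 0 <= p k l <= 1) /\
  (forall l, \sum_(k : K) p k l = 1).

Definition precluded d (T : measurableType d) (R : realType)
  (P : {measure set T -> \bar R}) (f : T -> R) : Prop :=
  (\int[P]_x (f x)%:E = 0)%E.

Definition overlap d (T : measurableType d) (R : realType)
  (Q : {measure set T -> \bar R}) (f g : T -> R) : \bar R :=
  (\int[Q]_x (Num.min (f x) (g x))%:E)%E.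

(* If P_xy precludes outcome k, then p_k = 0 P_xy-almost everywhere, and since
   dP_xy = mu_xy dQ, Q-almost everywhere mu_xy vanishes wherever p_k does not.
   As the p_k sum to one, some p_k is nonzero at every point, so at Q-almost
   every point some density mu_xy vanishes.  By the PUC both products
   mu_00 mu_++ = mu_0+ mu_+0 then vanish, hence so do both minima, Q-a.e. *)

From HB Require Import structures.
From mathcomp Require Import all_boot all_order all_algebra.
From mathcomp Require Import all_classical all_reals all_analysis.
From mathcomp Require Import measurable_realfun.
Set Implicit Arguments.
Unset Strict Implicit.
Unset Printing Implicit Defensive.
Import Order.TTheory GRing.Theory Num.Theory.
Local Open Scope classical_set_scope.
Local Open Scope ring_scope.

Lemma minr_eq0_of_mulr_eq0 (R : realDomainType) (a b : R) :
  0 <= a -> 0 <= b -> a * b = 0 -> Num.min a b = 0.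
Proof.
move=> a0 b0 /eqP; rewrite mulf_eq0 => /orP[/eqP->|/eqP->].
- by rewrite min_l.
- by rewrite min_r.
Qed.

Section density.
Context d (T : measurableType d) (R : realType).

Lemma ge0_integral_eq0_ae (mu : {measure set T -> \bar R}) (f : T -> R) :
  measurable_fun setT f -> (forall x, 0 <= f x) ->
  (\int[mu]_x (f x)%:E = 0)%E -> \forall x \ae mu, f x = 0.
Proof.
move=> mf f0 intf0.
have : ae_eq mu setT (EFin \o f) (cst 0%E).
  apply/(ae_eq_integral_abs mu measurableT); first exact/measurable_EFinP.
  by rewrite -[RHS]intf0; apply: eq_integral => x _; rewrite gee0_abs ?lee_fin.
by apply: filterS => x /(_ I) [].
Qed.

Lemma density_negligible_ae (Q P : {measure set T -> \bar R}) (m : T -> R)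
    (N : set T) :
  is_density Q P m -> P.-negligible N -> \forall x \ae Q, N x -> m x = 0.
Proof.
move=> [mm [m0 Pm]] [A [mA PA0 NA]].
have : ae_eq Q A (EFin \o m) (cst 0%E).
  apply/(ae_eq_integral_abs Q mA).
    exact/measurable_EFinP/measurable_funS/mm.
  rewrite -PA0 Pm //; apply: eq_integral => x _.
  by rewrite gee0_abs ?lee_fin.
by apply: filterS => x mx /NA /mx [].
Qed.

Lemma precluded_density_ae (Q P : {measure set T -> \bar R}) (m f : T -> R) :
  is_density Q P m -> measurable_fun setT f -> (forall x, 0 <= f x) ->
  precluded P f -> \forall x \ae Q, f x != 0 -> m x = 0.
Proof.
move=> Pm mf f0 Pf.
have := density_negligible_ae Pm (ge0_integral_eq0_ae mf f0 Pf).
by apply: filterS => x mx fx; apply: mx => /eqP; rewrite (negbTE fx).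
Qed.

Lemma overlap_eq0_ae (Q : {measure set T -> \bar R}) (f g : T -> R) :
  measurable_fun setT f -> measurable_fun setT g ->
  (\forall x \ae Q, Num.min (f x) (g x) = 0) -> overlap Q f g = 0%E.
Proof.
move=> mf mg fg0; rewrite /overlap (ae_eq_integral (cst 0%E)) ?integral0 //.
- exact/measurable_EFinP/measurable_minr.
- by move: fg0; apply: filterS => x -> _.
Qed.

Lemma experiment_density_eq0_ae (Q : {measure set T -> \bar R}) (I : Type)
    (P : I -> {measure set T -> \bar R}) (mu : I -> T -> R)
    (K : finType) (p : K -> T -> R) :
  (forall i, is_density Q (P i) (mu i)) -> experiment p ->
  (forall k, exists i, precluded (P i) (p k)) ->
  \forall l \ae Q, exists i, mu i l = 0.
Proof.
move=> Pmu [pm [p01 p1]] prec.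
have p_ge0 k l : 0 <= p k l by have /andP[] := p01 k l.
have outcome_ae k : \forall l \ae Q, p k l != 0 -> exists i, mu i l = 0.
  have [i Pip] := prec k.
  have := precluded_density_ae (Pmu i) (pm k) (p_ge0 k) Pip.
  by apply: filterS => l mu0 /mu0; exists i.
have := filter_forall (ae_filter_ringOfSetsType Q) outcome_ae.
apply: filterS => l mu0.
have sum_neq0 : \sum_k p k l <> 0 by rewrite p1; exact/eqP/oner_neq0.
have [k /andP[_ /lt0r_neq0]] := psumr_neq0P (fun k _ => p_ge0 k l) sum_neq0.
exact: mu0.
Qed.

Lemma PUC_cross_products_eq0 (mu : bool -> bool -> T -> R) l x y :
  PUC mu -> mu x y l = 0 ->
  mu false false l * mu true true l = 0 /\
  mu false true l * mu true false l = 0.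
Proof.
move=> puc mxy; rewrite -(puc l).
suff -> : mu false false l * mu true true l = 0 by [].
case: x y mxy => [] [] mxy;
  by [rewrite mxy ?(mul0r, mulr0) | rewrite (puc l) mxy ?(mul0r, mulr0)].
Qed.

End density.

Theorem theorem1 (d : measure_display) (T : measurableType d) (R : realType)
  (P : bool -> bool -> probability T R)
  (Q : {measure set T -> \bar R})
  (mu : bool -> bool -> T -> R)
  (hdens : forall x y, is_density Q (P x y) (mu x y))
  (hpuc : PUC mu)
  (K : finType) (p : K -> T -> R)
  (hexp : experiment p)
  (hprec : forall k : K, exists x y, precluded (P x y) (p k)) :
  overlap Q (mu false false) (mu true true) = 0%E /\
  overlap Q (mu false true) (mu true false) = 0%E.
Proof.
have mu_ge0 x y l : 0 <= mu x y l by have [_ [+ _]] := hdens x y.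
have mmu x y : measurable_fun setT (mu x y) by have [] := hdens x y.
have some_mu_eq0 : \forall l \ae Q, exists i, mu i.1 i.2 l = 0.
  apply: (experiment_density_eq0_ae (P := fun i => P i.1 i.2)) hexp _.
  - by move=> [x y]; exact: hdens.
  - by move=> k; have [x [y Pp]] := hprec k; exists (x, y).
have products_eq0 : \forall l \ae Q,
    mu false false l * mu true true l = 0 /\
    mu false true l * mu true false l = 0.
  move: some_mu_eq0; apply: filterS => l [[x y]].
  exact: PUC_cross_products_eq0.
split; apply: overlap_eq0_ae => //; move: products_eq0; apply: filterS.
- by move=> l [+ _]; exact: minr_eq0_of_mulr_eq0.
- by move=> l [_ +]; exact: minr_eq0_of_mulr_eq0.
Qed.
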